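(* Let $\Phi=(V,C)$ be a CNF formula and $\theta\ge0$. Introduce new variables $U=\{u_c: c\in C\}$ and the CNF formula $\Phi'=(V\cup U,C')$ with $C'=\{u_c\lor c: c\in C\}$. Let $\mathcal P$ be the product distribution on $\{0,1\}^{V\cup U}$ in which each $v\in V$ is uniform on $\{0,1\}$ and each $u\in U$ equals $1$ with probability $\exp(-\theta)$ and $0$ with probability $1-\exp(-\theta)$. For $c'\in C'$ let $\mathcal B_{c'}$ be the event that $c'$ is not satisfied. Then for every $X\in\{0,1\}^V$, $$\Pr_{\mathcal P}\Big[\text{each } v\in V \text{ takes the value } X(v)\ \Big|\ \bigwedge_{c'\in C'}\overline{\mathcal B_{c'}}\Big]=\mu_\theta(X),$$ where $\mu_\theta(X)=\frac{\exp(-\theta|F(X)|)}{\sum_{Y\in\{0,1\}^V}\exp(-\theta|F(Y)|)}$ and $F(X)\subseteq C$ is the set of clauses of $\Phi$ not satisfied by $X$.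
   Context: The clause $u_c\lor c$ is satisfied by an assignment if $u_c=1$ or the clause $c$ is satisfied. *)

From HB Require Import structures.
From mathcomp Require Import all_boot all_order all_algebra.
From mathcomp Require Import all_classical all_reals all_analysis.
Set Implicit Arguments. Unset Strict Implicit. Unset Printing Implicit Defensive.
Import Order.TTheory GRing.Theory Num.Theory.
Local Open Scope ring_scope.

(* A literal over variables of type T is a pair (x, b): it is satisfied by an
   assignment Z when Z x = b (b = true: positive literal x, b = false: ~x). *)
Definition clause (T : finType) := {set (T * bool)}.

Definition clause_sat (T : finType) (Z : {ffun T -> bool}) (c : clause T) : bool :=
  [exists l in c, Z l.1 == l.2].

Definition unsat_clauses (V : finType) (C : {set clause V}) (X : {ffun V -> bool})
  : {set clause V} := [set c in C | ~~ clause_sat X c].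

Definition mu_theta (R : realType) (V : finType) (C : {set clause V}) (theta : R)
  (X : {ffun V -> bool}) : R :=
  expR (- theta * #|unsat_clauses C X|%:R) /
  \sum_(Y : {ffun V -> bool}) expR (- theta * #|unsat_clauses C Y|%:R).

(* The index type of the new variables u_c, c \in C. *)
Definition clauseIdx (V : finType) (C : {set clause V}) : finType :=
  {c : clause V | c \in C}.

Definition vars' (V : finType) (C : {set clause V}) : finType :=
  (V + clauseIdx C)%type.

Definition ext_clause (V : finType) (C : {set clause V}) (c : clauseIdx C)
  : clause (vars' C) :=
  (inr c, true) |: [set (inl l.1, l.2) | l in val c].

Definition ext_clauses (V : finType) (C : {set clause V}) : {set clause (vars' C)} :=
  [set ext_clause c | c : clauseIdx C].

Definition marg (R : realType) (V : finType) (C : {set clause V}) (theta : R)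
  (x : vars' C) (b : bool) : R :=
  match x with
  | inl _ => 2^-1
  | inr _ => if b then expR (- theta) else 1 - expR (- theta)
  end.

Definition prodP (R : realType) (V : finType) (C : {set clause V}) (theta : R)
  (Z : {ffun vars' C -> bool}) : R :=
  \prod_(x : vars' C) marg theta x (Z x).

Definition PrP (R : realType) (V : finType) (C : {set clause V}) (theta : R)
  (E : pred {ffun vars' C -> bool}) : R :=
  \sum_(Z | E Z) prodP theta Z.

Definition all_sat' (V : finType) (C : {set clause V}) (Z : {ffun vars' C -> bool}) : bool :=
  [forall c' in ext_clauses C, clause_sat Z c'].

Definition agrees (V : finType) (C : {set clause V}) (X : {ffun V -> bool})
  (Z : {ffun vars' C -> bool}) : bool :=
  [forall v : V, Z (inl v) == X v].

Definition condPr (R : realType) (V : finType) (C : {set clause V}) (theta : R)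
  (A B : pred {ffun vars' C -> bool}) : R :=
  PrP theta (fun Z => A Z && B Z) / PrP theta B.

From HB Require Import structures.
From mathcomp Require Import all_boot all_order all_algebra.
From mathcomp Require Import all_classical all_reals all_analysis.
Import Order.TTheory GRing.Theory Num.Theory.
Local Open Scope ring_scope.

(* Once the V-part of an assignment is fixed to X, the event "every clause
   u_c \/ c holds" only constrains u_c for the clauses c violated by X, where
   it forces u_c = 1.  Hence the joint event {Z|V = X} /\ {all of C' holds} is
   a product event, of probability 2^-|V| * exp(-theta)^|F(X)|.  Summing over X
   gives Pr[all of C' holds], and the factor 2^-|V| cancels in the quotient. *)

Lemma bigA_distr_bigA_cond (R : comPzSemiRingType) (I T : finType)
    (A : I -> pred T) (p : I -> T -> R) :
  \prod_i \sum_(t | A i t) p i t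
    = \sum_(f : {ffun I -> T} | [forall i, A i (f i)]) \prod_i p i (f i).
Proof.
under eq_bigr do rewrite big_mkcond.
rewrite bigA_distr_bigA [RHS]big_mkcond; apply: eq_bigr => f _.
have [/forallP allA | /forallPn[i notAi]] := boolP [forall i, A i (f i)].
  by apply: eq_bigr => i _; rewrite allA.
by rewrite (bigD1 i) //= (negbTE notAi) mul0r.
Qed.

Lemma prod_sub_if (R : comPzSemiRingType) (T : finType) (C : {set T})
    (P : pred T) (a : R) :
  \prod_(c : {c : T | c \in C}) (if P (val c) then 1 else a)
    = a ^+ #|[set c in C | ~~ P c]|.
Proof.
transitivity (\prod_(c in C) (if P c then 1 else a)); first by rewrite (big_sub C).
rewrite -prodr_const big_mkcond [RHS]big_mkcond; apply: eq_bigr => c _.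
by rewrite inE; case: (c \in C); case: (P c).
Qed.

Section ExtendedFormula.
Variables (R : realType) (V : finType) (C : {set clause V}) (theta : R).
Implicit Types (X : {ffun V -> bool}) (Z : {ffun vars' C -> bool}).

Lemma ext_clause_sat {X Z} (c : clauseIdx C) :
    agrees X Z ->
  clause_sat Z (ext_clause c) = Z (inr c) || clause_sat X (val c).
Proof.
move=> /forallP agXZ; apply/existsP/orP => [[l]|].
  rewrite in_setU1 => /andP[/orP[/eqP-> /eqP Zu | /imsetP[l' l'c ->] /= /eqP Zl']].
    by left.
  by right; apply/existsP; exists l'; rewrite l'c -Zl' (eqP (agXZ _)) eqxx.
case=> [Zu | /existsP[l /andP[lc /eqP Xl]]].
  by exists (inr c, true); rewrite setU11 /= Zu.
exists (inl l.1, l.2); rewrite in_setU1 /= (eqP (agXZ _)) Xl eqxx andbT.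
by rewrite (imset_f (fun l : V * bool => (inl l.1, l.2))) ?orbT.
Qed.

Definition allowed X (x : vars' C) (b : bool) : bool :=
  match x with
  | inl v => b == X v
  | inr c => clause_sat X (val c) || b
  end.

Lemma agrees_all_sat'E X Z :
  agrees X Z && all_sat' Z = [forall x, allowed X x (Z x)].
Proof.
apply/andP/forallP => [[agXZ /forallP satZ] [v | c] /= | allowedZ].
- exact: (forallP agXZ).
- have := satZ (ext_clause c).
  by rewrite imset_f ?inE // (ext_clause_sat c agXZ) orbC.
have agXZ : agrees X Z by apply/forallP => v; exact: (allowedZ (inl v)).
split=> //; apply/forallP => c'; apply/implyP => /imsetP[c _ ->].
by rewrite (ext_clause_sat c agXZ) orbC; exact: (allowedZ (inr c)).
Qed.

Lemma PrP_agrees_all_sat' X :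
  PrP theta (fun Z => agrees X Z && all_sat' Z)
    = 2^-1 ^+ #|V| * expR (- theta * #|unsat_clauses C X|%:R).
Proof.
rewrite /PrP (eq_bigl _ _ (agrees_all_sat'E X)) -bigA_distr_bigA_cond big_sumType.
congr (_ * _).
  by rewrite -prodr_const; apply: eq_bigr => v _; rewrite big_pred1_eq.
rewrite expRM_natr -prod_sub_if; apply: eq_bigr => c _.
rewrite big_mkcond big_bool /=.
by case: (clause_sat X (val c)); rewrite /= ?addr0 // addrC subrK.
Qed.

Lemma PrP_sum_agrees (B : pred {ffun vars' C -> bool}) :
  PrP theta B = \sum_X PrP theta (fun Z => agrees X Z && B Z).
Proof.
rewrite /PrP (partition_big (fun Z => [ffun v => Z (inl v)]) predT) //=.
apply: eq_bigr => X _; apply: eq_bigl => Z; rewrite andbC; congr (_ && _).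
apply/eqP/forallP => [<- v | agXZ]; first by rewrite ffunE.
by apply/ffunP => v; rewrite ffunE; apply/eqP.
Qed.

End ExtendedFormula.

(* The hypothesis 0 <= theta only makes P a probability distribution; the
   identity itself is algebraic and holds for every theta. *)
Theorem proposition7p9 (R : realType) (V : finType) (C : {set clause V})
  (theta : R) (htheta : 0 <= theta) (X : {ffun V -> bool}) :
  condPr theta (agrees X) (@all_sat' V C) = mu_theta C theta X.
Proof.
rewrite /condPr PrP_agrees_all_sat' PrP_sum_agrees.
under eq_bigr do rewrite PrP_agrees_all_sat'.
have half_pow_neq0 : 2^-1 ^+ #|V| != 0 :> R.
  by rewrite expf_neq0 // invr_eq0 pnatr_eq0.
by rewrite /mu_theta -mulr_sumr invfM mulrACA mulfV // mul1r.
Qed.
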